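(* Let $\mathcal{S}$ be a locating-dominating set of $G_{2,m}=P_2\square P_m$, with vertices labeled $v_1,\dots,v_{2m}$ as described in the context. Suppose there is a $(2\times 4)$-block $\mathcal{B}$ of $G_{2,m}$ consisting of the vertices $v_i,\dots,v_{i+7}$ such that $|\mathcal{B}\cap\mathcal{S}|=2$. Then $i\neq 1$, $i+7\neq 2m$, and $v_{i-2},v_{i-1},v_{i+8},v_{i+9}\in\mathcal{S}$.
   Context: $P_n$ is the path on $n$ vertices, $\square$ the Cartesian product, and $G_{n,m}=P_n\square P_m$ is viewed as a grid with $n$ rows and $m$ columns. Vertices are labeled column by column: the vertex in row $r$ ($1\le r\le n$) and column $c$ ($1\le c\le m$) is $v_{r+n(c-1)}$; vertices in the same column (or same row, adjacent columns) are adjacent as in the grid. A $(n\times \ell)$-block is the set of vertices in $\ell$ consecutive columns. For $C\subseteq V(G)$ and $v\in V(G)$ let $I(v)=N[v]\cap C$ ($N[v]$ the closed neighborhood). $C$ is a locating-dominating set if $I(v)\neq\emptyset$ for all $v\in V(G)\setminus C$ and $I(u)\neq I(v)$ for all distinct $u,v\in V(G)\setminus C$. *)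

From mathcomp Require Import all_boot.
Set Implicit Arguments. Unset Strict Implicit. Unset Printing Implicit Defensive.

Definition gvertex (n m k : nat) : bool := (1 <= k) && (k <= n * m).

Definition grow (n k : nat) : nat := (k - 1) %% n + 1.
Definition gcol (n k : nat) : nat := (k - 1) %/ n + 1.

Definition gadj (n m u v : nat) : bool :=
  [&& gvertex n m u, gvertex n m v &
   ((gcol n u == gcol n v) && ((grow n u == (grow n v).+1) || (grow n v == (grow n u).+1)))
   || ((grow n u == grow n v) && ((gcol n u == (gcol n v).+1) || (gcol n v == (gcol n u).+1)))].

Definition gclosed_nbhd (n m v u : nat) : bool :=
  (gvertex n m v && (u == v)) || gadj n m v u.

Definition Iset (n m : nat) (C : pred nat) (v : nat) : pred nat :=
  fun u => gclosed_nbhd n m v u && C u.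

Definition locating_dominating (n m : nat) (C : pred nat) : Prop :=
  (forall k, C k -> gvertex n m k) /\
  (forall v, gvertex n m v -> ~~ C v -> exists u, Iset n m C v u) /\
  (forall u v, gvertex n m u -> gvertex n m v -> ~~ C u -> ~~ C v -> u <> v ->
     exists w, Iset n m C u w != Iset n m C v w).

(* the (n x l)-block made of columns c, ..., c+l-1 (requires 1 <= c, c+l-1 <= m):
   its vertices are v_i, ..., v_{i + n*l - 1} with i = n*(c-1)+1 *)
Definition block_start (n m l i : nat) : Prop :=
  exists c, [/\ 1 <= c, c + l - 1 <= m & i = n * (c - 1) + 1].

From mathcomp Require Import all_boot zify.

Set Implicit Arguments.
Unset Strict Implicit.
Unset Printing Implicit Defensive.

(* The closed neighbourhood of a vertex of the block lies in the window made of
   the block and the two columns on either side of it, so the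
   locating-dominating conditions at the eight block vertices only involve the
   twelve bits of S on that window.  An exhaustive check of all 2^12 patterns
   shows that whenever exactly two block bits are set and these conditions
   hold, the four bits outside the block are set as well; those vertices then
   exist, so the block is neither the first nor the last one. *)

(* Adjacency in the ladder P_2 \square P_oo: odd vertices form the first row. *)
Definition ladder_adj (u v : nat) : bool :=
  [|| v == u + 2, u == v + 2, odd u && (v == u + 1) | odd v && (u == v + 1)].

Lemma gadj2E m u v :
  gadj 2 m u v = [&& gvertex 2 m u, gvertex 2 m v & ladder_adj u v].
Proof. by rewrite /gadj /gvertex /grow /gcol /ladder_adj; apply/idP/idP; lia. Qed.

Lemma ladder_adj_addl d u v :
  ~~ odd d -> ladder_adj (d + u) (d + v) = ladder_adj u v.
Proof.
by move=> even_d; rewrite /ladder_adj !oddD (negbTE even_d) -!addnA !eqn_add2l.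
Qed.

Lemma gclosed_nbhd2_near m v u : gclosed_nbhd 2 m v u -> v - 2 <= u <= v + 2.
Proof.
rewrite /gclosed_nbhd gadj2E /ladder_adj.
case/orP=> [/andP[_ /eqP ->] | /and3P[_ _]]; first lia.
by case/or4P=> [/eqP | /eqP | /andP[_ /eqP] | /andP[_ /eqP]] ->; lia.
Qed.

(* Position k of the window of the block starting at v_i stands for v_(i+k-2)
   (for i = 1, truncated subtraction sends positions 0 and 1 to the non-vertex
   0).  As i is odd, v_(i+k-2) lies in the first row iff k.+1 is odd. *)
Definition window (S : pred nat) (i : nat) : seq bool :=
  [seq S (i + k - 2) | k <- iota 0 12].

Definition window_I (w : seq bool) (j k : nat) : bool :=
  nth false w k && ((k == j) || ladder_adj j.+1 k.+1).

Definition window_dominated (w : seq bool) (j : nat) : bool :=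
  nth false w j || has (window_I w j) (iota 0 12).

Definition window_separated (w : seq bool) (j k : nat) : bool :=
  [|| nth false w j, nth false w k, j == k |
      has (fun l => window_I w j l != window_I w k l) (iota 0 12)].

Definition block_locating (w : seq bool) : bool :=
  all (window_dominated w) (iota 2 8) &&
  all (fun j => all (window_separated w j) (iota 2 8)) (iota 2 8).

(* Nested [if]s rather than [&&]: [vm_compute] is call-by-value, and this
   skips [block_locating] on all but the 448 patterns with two block bits. *)
Definition border_forced (w : seq bool) : bool :=
  let x := nth false w in
  if count x (iota 2 8) == 2 then
    if block_locating w then [&& x 0, x 1, x 10 & x 11] else true
  else true.

Fixpoint bitseqs (n : nat) : seq (seq bool) :=
  if n is n'.+1 then map (cons true) (bitseqs n') ++ map (cons false) (bitseqs n')
  else [:: [::]].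

Lemma bitseqsP n (s : seq bool) : size s = n -> s \in bitseqs n.
Proof.
elim: n s => [|n IHn] [|b s] //= [/IHn s_in].
by rewrite mem_cat; case: b; rewrite map_f ?orbT.
Qed.

Lemma border_forced_all : all border_forced (bitseqs 12).
Proof. vm_compute. reflexivity. Qed.

Lemma block_locating_border (w : seq bool) :
  size w = 12 -> count (nth false w) (iota 2 8) = 2 -> block_locating w ->
  [&& nth false w 0, nth false w 1, nth false w 10 & nth false w 11].
Proof.
move=> /bitseqsP w_in two_in_block loc_w.
by have := allP border_forced_all w w_in; rewrite /border_forced two_in_block eqxx loc_w.
Qed.

Lemma nth_window S i k : k < 12 -> nth false (window S i) k = S (i + k - 2).
Proof. by move=> k_lt; rewrite (nth_map 0) ?size_iota // nth_iota. Qed.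

Lemma count_window S i :
  count S (iota i 8) = count (nth false (window S i)) (iota 2 8).
Proof.
rewrite [RHS](eq_in_count (a2 := fun k => S (i + k - 2))); last first.
  by move=> k; rewrite mem_iota => k_in; rewrite nth_window //; lia.
rewrite -[in LHS](addn0 i) iotaDl -[iota 2 8]/(iota (2 + 0) 8) iotaDl !count_map.
by apply: eq_count => k /=; congr S; lia.
Qed.

Section BlockWindow.

Variables (m : nat) (S : pred nat) (i : nat).
Hypotheses (odd_i : odd i) (block_in : i + 7 <= 2 * m).
Hypothesis ld : locating_dominating 2 m S.

Let w := window S i.

Lemma gvertex_block j : 2 <= j < 10 -> gvertex 2 m (i + j - 2).
Proof. by rewrite /gvertex; lia. Qed.

Lemma Iset_window j k : 2 <= j < 10 -> k < 12 ->
  Iset 2 m S (i + j - 2) (i + k - 2) = window_I w j k.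
Proof.
move=> j_in k_lt; rewrite /Iset /window_I nth_window // andbC.
case Sk: (S (i + k - 2)) => //=.
have /andP[k_pos _] := ld.1 _ Sk.
have eq_vertex : (i + k - 2 == i + j - 2) = (k == j) by apply/eqP/eqP; lia.
have shift_j : 2 + (i + j - 2) = (i - 1) + j.+1 by lia.
have shift_k : 2 + (i + k - 2) = (i - 1) + k.+1 by lia.
have even_i1 : ~~ odd (i - 1) by lia.
rewrite /gclosed_nbhd gadj2E gvertex_block // (ld.1 _ Sk) eq_vertex /=.
by rewrite -(ladder_adj_addl (d := 2)) // shift_j shift_k ladder_adj_addl.
Qed.

Lemma Iset_window_support j u : 2 <= j < 10 ->
  Iset 2 m S (i + j - 2) u -> exists2 k, k < 12 & u = i + k - 2.
Proof.
move=> j_in /andP[/gclosed_nbhd2_near near_u _].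
by exists (u + 2 - i); lia.
Qed.

Lemma Iset_window_witness j u : 2 <= j < 10 -> Iset 2 m S (i + j - 2) u ->
  exists2 k, k \in iota 0 12 &
    forall j', 2 <= j' < 10 -> Iset 2 m S (i + j' - 2) u = window_I w j' k.
Proof.
move=> j_in Iu; have [k k_lt ->] := Iset_window_support j_in Iu.
by exists k; rewrite ?mem_iota // => j' j'_in; rewrite Iset_window.
Qed.

Lemma window_locating : block_locating w.
Proof.
have [_ [dom sep]] := ld.
apply/andP; split; apply/allP => j; rewrite mem_iota => j_in.
  rewrite /window_dominated; have [//|Sj] := boolP (nth false w j).
  rewrite nth_window in Sj; last lia.
  have [u Iu] := dom _ (gvertex_block j_in) Sj.
  have [k k_in Ik] := Iset_window_witness j_in Iu.
  by apply/orP; right; apply/hasP; exists k; rewrite // -Ik.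
apply/allP => k; rewrite mem_iota => k_in.
have [j_lt k_lt] : j < 12 /\ k < 12 by lia.
rewrite /window_separated !nth_window //.
have [//|Sj] := boolP (S (i + j - 2)); have [//|Sk] := boolP (S (i + k - 2)).
have [//|j_neq_k] := eqVneq j k.
rewrite !orFb.
have [|u sep_u] := sep _ _ (gvertex_block j_in) (gvertex_block k_in) Sj Sk.
  by move: j_neq_k => /eqP; lia.
have [Ij|Ij] := boolP (Iset 2 m S (i + j - 2) u).
  have [l l_in Il] := Iset_window_witness j_in Ij.
  by apply/hasP; exists l; rewrite // -!Il.
have Ik : Iset 2 m S (i + k - 2) u.
  by apply: contraNT sep_u => /negbTE ->; rewrite (negbTE Ij).
have [l l_in Il] := Iset_window_witness k_in Ik.
by apply/hasP; exists l; rewrite // -!Il.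
Qed.

End BlockWindow.

Theorem lemma4p4 (m : nat) (S : pred nat) (i : nat) :
  locating_dominating 2 m S ->
  block_start 2 m 4 i ->
  count S (iota i 8) = 2 ->
  [/\ i <> 1, i + 7 <> 2 * m, S (i - 2), S (i - 1) & (S (i + 8) && S (i + 9))].
Proof.
move=> ld [c [c_pos c_le i_def]] two_in_block.
have odd_i : odd i by rewrite i_def addn1 /= oddM.
have block_in : i + 7 <= 2 * m by lia.
have := block_locating_border _ _ (window_locating odd_i block_in ld).
rewrite size_map size_iota -count_window => /(_ erefl two_in_block).
rewrite !nth_window // => /and4P[S0 S1 S10 S11].
have /andP[left_col _] := ld.1 _ S0; have /andP[_ right_col] := ld.1 _ S11.
have [-> -> -> ->] : [/\ i - 2 = i + 0 - 2, i - 1 = i + 1 - 2,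
  i + 8 = i + 10 - 2 & i + 9 = i + 11 - 2] by split; lia.
by split=> //; [lia | lia | rewrite S10].
Qed.
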